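(* For every simplicial complex $\Delta$ on a finite vertex set $[m]$ one has $\mathrm{Inc}(\mathcal{C}(\Delta))\subseteq\mathcal{C}(\mathrm{Inc}(\Delta))$.
   Context: $\mathbb{N}=\{1,2,3,\dots\}$, $[m]=\{1,\dots,m\}$. A simplicial complex on $[m]$ is a collection of subsets of $[m]$ closed under taking subsets. For $d\ge1$, $F_d(\Delta)$ is the set of $d$-element faces of $\Delta$, viewed in $\binom{\mathbb{N}}{d}$ (the $d$-subsets of $\mathbb{N}$, written $\mathbf{u}=(u_1,\dots,u_d)$ with $u_1<\cdots<u_d$). Squashed order: $\mathbf{u}<\mathbf{v}$ iff the largest element of the symmetric difference of $\mathbf u,\mathbf v$ lies in $\mathbf{v}$. For finite $\mathcal{F}\subseteq\binom{\mathbb{N}}{d}$, $\mathcal{C}(\mathcal{F})$ is the set of the $|\mathcal{F}|$ smallest elements of $\binom{\mathbb{N}}{d}$ in the squashed order; for a simplicial complex, $\mathcal{C}(\Delta)=\bigcup_{d\ge1}\mathcal{C}(F_d(\Delta))$ (together with the empty face). $\mathrm{Inc}_1$ is the set of maps $\pi\colon\mathbb{N}\to\mathbb{N}$ with $\pi(j)<\pi(j+1)$ and $\pi(j)\le j+1$ for all $j$, acting by $\pi(\mathbf{u})=(\pi(u_1),\ldots,\pi(u_d))$; $\mathrm{Inc}(\mathcal{F})=\{\pi(\mathbf{u})\mid\mathbf{u}\in\mathcal{F},\pi\in\mathrm{Inc}_1\}$ and $\mathrm{Inc}(\Delta)=\bigcup_{d\ge1}\mathrm{Inc}(F_d(\Delta))$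 (together with the empty face). *)

From mathcomp Require Import all_boot.
Set Implicit Arguments. Unset Strict Implicit. Unset Printing Implicit Defensive.

(* A finite subset of N = {1,2,...} is represented canonically by the
   strictly increasing list of its elements (all >= 1). *)
Definition is_face (u : seq nat) : bool := sorted ltn u && all (fun x => 0 < x) u.

Definition dface (d : nat) (u : seq nat) : bool := is_face u && (size u == d).

(* Squashed order: u < v iff the largest element of the symmetric difference
   of u and v lies in v, i.e. there is x in v \ u such that u and v agree
   above x. *)
Definition sqlt (u v : seq nat) : bool :=
  has (fun x => (x \notin u) &&
         all (fun y => (y \in u) == (y \in v)) [seq y <- u ++ v | x < y]) v.

Definition has_card (P : seq nat -> Prop) (n : nat) : Prop :=
  exists s : seq (seq nat), uniq s /\ size s = n /\ forall x, P x <-> x \in s.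

(* C(F) for a finite family F of d-subsets: the |F| smallest d-subsets of N in
   squashed order, i.e. those d-subsets v such that the number of d-subsets
   w <= v is at most |F|. *)
Definition Cd (d : nat) (F : seq nat -> Prop) (v : seq nat) : Prop :=
  dface d v /\
  exists n k, has_card F n /\
    has_card (fun w => dface d w /\ (w = v \/ sqlt w v)) k /\ k <= n.

(* Inc_1 : maps pi : N -> N with pi(j) < pi(j+1) and pi(j) <= j+1 for j in N
   (values on 0 are irrelevant). *)
Definition Inc1 (pi : nat -> nat) : Prop :=
  forall j, 0 < j -> [/\ 0 < pi j, pi j < pi j.+1 & pi j <= j.+1].

Definition IncF (F : seq nat -> Prop) (v : seq nat) : Prop :=
  exists u pi, F u /\ Inc1 pi /\ v = map pi u.

Definition Fd (G : seq nat -> Prop) (d : nat) (u : seq nat) : Prop :=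
  G u /\ size u = d.

Definition simplicial_complex (m : nat) (D : seq nat -> Prop) : Prop :=
  (forall u, D u -> is_face u && all (fun x => x <= m) u) /\
  (forall u v, D u -> is_face v -> {subset v <= u} -> D v).

Definition Ccomplex (G : seq nat -> Prop) (v : seq nat) : Prop :=
  v = [::] \/ exists d, 0 < d /\ Cd d (Fd G d) v.

Definition Inccomplex (G : seq nat -> Prop) (v : seq nat) : Prop :=
  v = [::] \/ exists d, 0 < d /\ IncF (Fd G d) v.

From mathcomp Require Import all_boot zify.
Set Implicit Arguments. Unset Strict Implicit. Unset Printing Implicit Defensive.

(* A d-face of C(Delta) is a d-set w among the |F_d(Delta)| first d-sets in
   squashed order, i.e. of squashed rank at most |F_d(Delta)|.  A map of Inc_1
   sends w to a d-set of rank at most gamma d (rank w), the rank of w + 1.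
   Hence the corollary follows from the Macaulay-type lower bound
   |Inc(F)| >= gamma d |F| for every finite family F of d-sets, applied to
   F = F_d(Delta), since Inc(F_d(Delta)) = F_d(Inc(Delta)).

   The lower bound is proved by induction on d and on the
   largest element occurring in F, simultaneously with the inequalities on
   gamma (subadditivity of gamma being itself a consequence of the lower
   bound). *)

(* For n > 0, the (e+1)-binomial cascade of n starts with the unique K such
   that 'C(K, e.+1) < n <= 'C(K.+1, e.+1); it exists since n <= 'C(n+e, e.+1). *)
Lemma leq_bin_addn e n : 0 < n -> n <= 'C(n + e, e.+1).
Proof.
elim: n => [//|n IH] _.
case: n IH => [|n] IH; first by rewrite add1n binn.
rewrite addSn binS.
have := IH isT; have : 0 < 'C(n.+1 + e, e) by rewrite bin_gt0; lia.
lia.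
Qed.

Lemma cascade_exists e n : exists k, n <= 'C(k, e.+1).
Proof. by exists (n.+1 + e); apply: ltnW; apply: leq_bin_addn. Qed.

Definition cascade_top (e n : nat) : nat := (ex_minn (cascade_exists e n)).-1.

Lemma cascade_topP e n : 0 < n ->
  'C(cascade_top e n, e.+1) < n <= 'C((cascade_top e n).+1, e.+1).
Proof.
move=> n0; rewrite /cascade_top; case: ex_minnP => k hk kmin.
have k0 : 0 < k by move: hk; case: k {kmin} => //; rewrite bin0n; lia.
rewrite prednK // hk andbT ltnNge; apply/negP => /kmin; lia.
Qed.

Lemma cascade_top_eq e n K :
  'C(K, e.+1) < n <= 'C(K.+1, e.+1) -> cascade_top e n = K.
Proof.
move=> /andP[h1 h2]; have /andP[b1 b2] := cascade_topP e (leq_ltn_trans (leq0n _) h1).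
case: (ltngtP (cascade_top e n) K) => // h.
- by have := leq_bin2l e.+1 h; lia.
- by have := leq_bin2l e.+1 h; lia.
Qed.

(* gamma d n: writing n = 'C(K, d) + s with 0 < s <= 'C(K, d-1), one has
   gamma d n = 'C(K+1, d) + gamma (d-1) s.  It is the squashed rank of the
   d-set obtained by adding 1 to every element of the n-th d-set, i.e. the
   size of Inc of the first n d-sets (see [rank_shift] below). *)
Fixpoint gamma (d n : nat) : nat :=
  if d is e.+1 then
    (if n is 0 then 0
     else 'C((cascade_top e n).+1, e.+1) + gamma e (n - 'C(cascade_top e n, e.+1)))
  else n.

Lemma gamma0n n : gamma 0 n = n. Proof. by []. Qed.
Lemma gamma_d0 d : gamma d 0 = 0. Proof. by case: d. Qed.

Lemma gamma_cascade e K s : 0 < s <= 'C(K, e) ->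
  gamma e.+1 ('C(K, e.+1) + s) = 'C(K.+1, e.+1) + gamma e s.
Proof.
move=> /andP[s0 sK].
have top : cascade_top e ('C(K, e.+1) + s) = K.
  by apply: cascade_top_eq; rewrite binS; lia.
rewrite /=; case E: ('C(K, e.+1) + s) => [|n]; first lia.
by rewrite -E top addKn.
Qed.

Lemma gamma_bin e K : e <= K -> gamma e 'C(K, e) = 'C(K.+1, e).
Proof.
elim: e K => [|e IH] K eK; first by rewrite !bin0.
case: K eK => [//|K] eK.
rewrite binS gamma_cascade; last by rewrite bin_gt0 leqnn; lia.
by rewrite IH 1?[in RHS]binS //; lia.
Qed.

Lemma gamma_cascade0 e K s : s <= 'C(K, e) -> 0 < 'C(K, e.+1) + s ->
  gamma e.+1 ('C(K, e.+1) + s) = 'C(K.+1, e.+1) + gamma e s.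
Proof.
case: s => [|s] sK h; last by apply: gamma_cascade; lia.
by rewrite addn0 gamma_d0 addn0 gamma_bin //; move: h; rewrite addn0 bin_gt0.
Qed.

Lemma gamma_decomp e n : 0 < n -> exists K s,
  [/\ n = 'C(K, e.+1) + s, 0 < s, s <= 'C(K, e)
    & gamma e.+1 n = 'C(K.+1, e.+1) + gamma e s].
Proof.
move=> n0; have /andP[b1 b2] := cascade_topP e n0.
set K := cascade_top e n in b1 b2 *.
have sK : n - 'C(K, e.+1) <= 'C(K, e) by move: b2; rewrite binS; lia.
have hn : n = 'C(K, e.+1) + (n - 'C(K, e.+1)) by lia.
exists K, (n - 'C(K, e.+1)); split => //; first lia.
by rewrite {1}hn gamma_cascade //; apply/andP; split; lia.
Qed.

Lemma gamma_ltS e n : gamma e n < gamma e n.+1.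
Proof.
elim: e n => [//|e IH] [|n].
  have := @gamma_cascade e e 1; rewrite (@bin_small e e.+1) // !binn add0n => /(_ isT) ->.
  by rewrite gamma_d0.
have [K [s [hn s0 sK ->]]] := gamma_decomp e (ltn0Sn n).
case: (ltngtP s 'C(K, e)) sK => // hs _.
- rewrite (_ : n.+2 = 'C(K, e.+1) + s.+1); last lia.
  by rewrite gamma_cascade; [have := IH s; lia | lia].
- have eK : e <= K by rewrite -bin_gt0 -hs.
  rewrite (_ : n.+2 = 'C(K.+1, e.+1) + 1); last by rewrite binS; lia.
  rewrite gamma_cascade; last by rewrite bin_gt0; lia.
  rewrite hs gamma_bin // [in X in _ < X]binS.
  by have := IH 0; rewrite gamma_d0; lia.
Qed.

Lemma gamma_mono e m n : m <= n -> gamma e m <= gamma e n.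
Proof.
move=> /subnK <-; elim: (n - m) => [//|k IH]; rewrite addSn.
exact: leq_trans IH (ltnW (gamma_ltS e _)).
Qed.

Lemma gamma_addr e n k : gamma e n + k <= gamma e (n + k).
Proof.
elim: k => [|k IH]; first by rewrite !addn0.
by rewrite !addnS; have := gamma_ltS e (n + k); lia.
Qed.

Lemma leq_gamma e n : n <= gamma e n.
Proof. by have := gamma_addr e 0 n; rewrite gamma_d0. Qed.

Lemma gamma1 n : 0 < n -> gamma 1 n = n.+1.
Proof.
move=> n0; have [K [s [hn s0 sK ->]]] := gamma_decomp 0 n0.
by move: sK hn; rewrite bin0 !bin1 gamma0n; lia.
Qed.

(* Inequalities satisfied by gamma.  They are proved together with the lower
   bound on Inc, by a simultaneous induction on the dimension (see
   [gamma_inequalities]). *)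
Definition subadditive e := forall x y, gamma e (x + y) <= gamma e x + gamma e y.

Definition succ_bound e := forall b, gamma e.+1 b <= b + gamma e b.

(* The bound used to add the sets with a new maximal element in the induction. *)
Definition split_bound e :=
  forall a b, gamma e.+1 (a + b) <= maxn (gamma e.+1 a) (a + b) + gamma e b.

(* Exchange inequality, for P < 'C(m, f): it compares the window of length
   'C(m, f) - P ending at the full block 'C(m, f) with the window of the same
   length starting at r.  It is proved separately when r <= gamma f P and
   when gamma f P < r. *)
Definition exchange_low f := forall m P r, f <= m -> P < 'C(m, f) -> r <= gamma f P ->
  gamma f 'C(m, f) + gamma f r <= gamma f P + gamma f (r + ('C(m, f) - P)).

Definition exchange_high f := forall m P r, f <= m -> P < 'C(m, f) -> gamma f P < r ->
  gamma f 'C(m, f) + gamma f r <= r + gamma f (r + ('C(m, f) - P)).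

Definition exchange f := forall m P r, f <= m -> P < 'C(m, f) ->
  gamma f 'C(m, f) + gamma f r <= maxn (gamma f P) r + gamma f (r + ('C(m, f) - P)).

Lemma gamma_bin_addr e : subadditive e -> forall M t, e < M ->
  'C(M.+1, e.+1) + gamma e t <= gamma e.+1 ('C(M, e.+1) + t).
Proof.
move=> sub M t; elim: t {-2}t (leqnn t) M => [|T IH] t tT M eM.
  have -> : t = 0 by lia.
  by rewrite gamma_d0 !addn0 gamma_bin.
case: (leqP t 'C(M, e)) => ht.
  by rewrite gamma_cascade0 // addn_gt0 bin_gt0 eM.
have cM : 0 < 'C(M, e) by rewrite bin_gt0; lia.
have -> : 'C(M, e.+1) + t = 'C(M.+1, e.+1) + (t - 'C(M, e)) by rewrite binS; lia.
have := IH (t - 'C(M, e)) ltac:(lia) M.+1 ltac:(lia).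
have := sub 'C(M, e) (t - 'C(M, e)); rewrite subnKC ?(ltnW ht) // gamma_bin; last lia.
have := binS M.+1 e; lia.
Qed.

Lemma succ_bound0 : succ_bound 0.
Proof.
move=> [|b]; first by rewrite gamma_d0.
by rewrite gamma1 // gamma0n; lia.
Qed.

Lemma succ_boundS e : subadditive e -> succ_bound e -> succ_bound e.+1.
Proof.
move=> sub sb [|b]; first by rewrite gamma_d0.
have [K [s [hn s0 sK ->]]] := gamma_decomp e.+1 (ltn0Sn b).
have eK : e.+1 <= K by rewrite -bin_gt0; lia.
case: (ltngtP K e.+1) eK => // hK _.
- case: K hK hn sK => [//|M] hM hn sK.
  have : 'C(M, e.+1) + s <= b.+1 by rewrite hn binS; lia.
  move=> /(gamma_mono e.+1).
  have := gamma_bin_addr sub s hM; have := sb s; have := binS M.+1 e.+1; lia.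
- subst K; move: sK hn; rewrite binn (bin_small (ltnSn e.+1)) => sK hn.
  have s1 : s = 1 by lia.
  by subst s; rewrite (_ : b.+1 = 1) ?binn; lia.
Qed.

Lemma split_bound0 : split_bound 0.
Proof.
move=> a [|b]; first by rewrite !addn0; lia.
by rewrite gamma1 ?gamma0n; lia.
Qed.

Lemma exchange_low1 : exchange_low 1.
Proof.
move=> m P r m1 Pm rP.
rewrite gamma_bin // !bin1 in Pm *.
case: P Pm rP => [|P] Pm rP.
  by move: rP; rewrite gamma_d0 leqn0 => /eqP ->; rewrite subn0 gamma_d0 gamma1 //; lia.
rewrite gamma1 // in rP *.
have := gamma_addr 1 r (m - P.+1); lia.
Qed.

Lemma exchangeP f : exchange_low f -> exchange_high f -> exchange f.
Proof.
move=> low high m P r fm Pm; case: (leqP r (gamma f P)) => hr.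
- by have := low m P r fm Pm hr; lia.
- by have := high m P r fm Pm hr; lia.
Qed.

Lemma exchange_highS e : split_bound e -> subadditive e -> exchange_high e.+1.
Proof.
move=> spl sub m P r em Pm hr.
have Pr : P < r by have := leq_gamma e.+1 P; lia.
have hspl := spl P (r - P); rewrite subnKC ?(ltnW Pr) // in hspl.
have hblock := gamma_bin_addr sub (r - P) (em : e < m).
rewrite (_ : r + ('C(m, e.+1) - P) = 'C(m, e.+1) + (r - P)); last lia.
rewrite gamma_bin //; lia.
Qed.

(* The inductive step of [exchange_low], once P is in the top block of
   'C(m1.+1, e.+2), i.e. P = 'C(m1, e.+2) + P', and the cascade of r.+1 is
   'C(M1, e.+2) + r1: either the shifted window r1 + q, q = 'C(m1, e.+1) - P',
   stays in the block of M1 or it crosses into the next block. *)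
Lemma exchange_low_block e : exchange_low e.+1 -> subadditive e.+1 ->
  forall m1 P' M1 r1, e.+1 <= m1 -> e.+1 <= M1 -> P' < 'C(m1, e.+1) ->
  0 < r1 <= 'C(M1, e.+1) -> (m1 < M1 -> r1 <= gamma e.+1 P') ->
  'C(m1.+1, e.+1) + 'C(M1.+1, e.+2) + gamma e.+1 r1 <=
  gamma e.+1 P' + gamma e.+2 ('C(M1, e.+2) + (r1 + ('C(m1, e.+1) - P'))).
Proof.
move=> low sub m1 P' M1 r1 em1 eM1 P'N /andP[r10 r1M] far.
set N := 'C(m1, e.+1) in P'N *; set q := N - P'.
have hN : gamma e.+1 N = 'C(m1.+1, e.+1) by rewrite gamma_bin.
have hM : gamma e.+1 'C(M1, e.+1) = 'C(M1.+1, e.+1) by rewrite gamma_bin.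
(* a window inside the blocks of m1 is dominated by P' *)
have near x : M1 <= m1 -> r1 + (N - x) <= 'C(M1, e.+1) -> r1 <= gamma e.+1 x.
  move=> Mm rx; have := leq_bin2l e.+1 Mm; rewrite -/N.
  by have := leq_gamma e.+1 x; lia.
case: (leqP (r1 + q) 'C(M1, e.+1)) => hq.
-
  rewrite gamma_cascade; last lia.
  have rP' : r1 <= gamma e.+1 P'.
    by case: (leqP M1 m1) => hMm; [apply: (near P') => //; lia | exact: far].
  by have := low m1 P' r1 em1 P'N rP'; rewrite -/N -/q hN; lia.
-
  set q1 := 'C(M1, e.+1) - r1; set t := r1 + q - 'C(M1, e.+1).
  rewrite (_ : _ + (r1 + q) = 'C(M1.+1, e.+2) + t); last by rewrite binS; lia.
  have ht := gamma_bin_addr sub t (ltac:(lia) : e.+1 < M1.+1).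
  have bM := binS M1.+1 e.+1.
  have Pt : P' + t = N - q1 by lia.
  have hsub := sub P' t; rewrite Pt in hsub.
  case: (posnP q1) => q10.
    have r1M' : r1 = 'C(M1, e.+1) by lia.
    by rewrite q10 subn0 in hsub; rewrite r1M' hM; lia.
  have rc : r1 <= gamma e.+1 (N - q1).
    case: (leqP M1 m1) => hMm; first by apply: near => //; lia.
    by have := gamma_mono e.+1 (leq_addr t P'); rewrite Pt; have := far hMm; lia.
  have := low m1 (N - q1) r1 em1 ltac:(lia) rc.
  by rewrite (_ : r1 + (N - (N - q1)) = 'C(M1, e.+1)) ?hM ?hN; lia.
Qed.

Lemma exchange_low_top e : exchange_low e.+1 -> subadditive e.+2 -> subadditive e.+1 ->
  forall m P r, e.+2 <= m -> 'C(m.-1, e.+2) <= P -> P < 'C(m, e.+2) -> r <= gamma e.+2 P ->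
  gamma e.+2 'C(m, e.+2) + gamma e.+2 r <= gamma e.+2 P + gamma e.+2 (r + ('C(m, e.+2) - P)).
Proof.
move=> low sub2 sub1 [//|m1] P [|r] em Ptop Pm rP; rewrite [m1.+1.-1]/= in Ptop.
  rewrite gamma_d0 add0n addn0; have := sub2 P ('C(m1.+1, e.+2) - P).
  by rewrite subnKC // ltnW.
have em1 : e.+1 <= m1 by lia.
have P0 : 0 < P by case: (posnP P) rP => [->|//]; rewrite gamma_d0.
set P' := P - 'C(m1, e.+2).
have hP : gamma e.+2 P = 'C(m1.+1, e.+2) + gamma e.+1 P'.
  by rewrite -gamma_cascade0 ?subnKC //; move: Pm; rewrite binS; lia.
have [M1 [r1 [hr r10 r1M ->]]] := gamma_decomp e.+1 (ltn0Sn r).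
have eM1 : e.+1 <= M1 by rewrite -bin_gt0; lia.
have far : m1 < M1 -> r1 <= gamma e.+1 P'.
  by move=> /(leq_bin2l e.+2); move: rP; rewrite hP; lia.
have hPP : P = 'C(m1, e.+2) + P' by rewrite subnKC.
have P'N : P' < 'C(m1, e.+1) by move: Pm; rewrite binS; lia.
have hwin : r.+1 + ('C(m1.+1, e.+2) - P) = 'C(M1, e.+2) + (r1 + ('C(m1, e.+1) - P')).
  by move: Pm; rewrite binS; lia.
have r1b : 0 < r1 <= 'C(M1, e.+1) by rewrite r10.
rewrite hP gamma_bin // [in X in X + _ <= _]binS hwin.
by have := exchange_low_block low sub1 em1 eM1 P'N r1b far; lia.
Qed.

(* [exchange_low] in dimension e.+2, by induction on m: if P is below the top
   block, first exchange 'C(m.-1, e.+2) against P, then the top block. *)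
Lemma exchange_lowS e : exchange_low e.+1 -> subadditive e.+2 -> subadditive e.+1 ->
  exchange_low e.+2.
Proof.
move=> low sub2 sub1 m; elim: m {-2}m (leqnn m) => [|M IH] m mM P r em Pm rP.
  lia.
case: (leqP 'C(m.-1, e.+2) P) => Ptop; first exact: exchange_low_top.
case: m mM em Pm Ptop => [//|m1] mM em Pm Ptop; rewrite [m1.+1.-1]/= in Ptop.
have em1 : e.+2 <= m1 by rewrite -bin_gt0; lia.
have h1 := IH m1 ltac:(lia) P r em1 Ptop rP.
have hr : r + ('C(m1, e.+2) - P) <= gamma e.+2 'C(m1, e.+2).
  have := gamma_addr e.+2 P ('C(m1, e.+2) - P); rewrite subnKC ?(ltnW Ptop) //; lia.
have top_lt : 'C(m1, e.+2) < 'C(m1.+1, e.+2).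
  by rewrite binS -addn1 leq_add2l bin_gt0; lia.
have := exchange_low_top low sub2 sub1 (m := m1.+1) em (leqnn _) top_lt hr.
have -> : r + ('C(m1, e.+2) - P) + ('C(m1.+1, e.+2) - 'C(m1, e.+2)) =
          r + ('C(m1.+1, e.+2) - P) by lia.
rewrite [m1.+1.-1]/=; lia.
Qed.

(* [split_bound] in dimension e.+1, by comparing the cascades of a and a + b:
   both in the same block (subadditivity), in consecutive blocks (exchange),
   or farther apart ([succ_bound]). *)
Lemma split_boundS e : subadditive e.+1 -> subadditive e -> succ_bound e ->
  succ_bound e.+1 -> exchange e.+1 -> split_bound e.+1.
Proof.
move=> sub1 sub0 sb0 sb1 exch a b.
case: (posnP b) => [->|b0]; first by rewrite !addn0; lia.
case: (posnP a) => [->|a0]; first by rewrite gamma_d0 !add0n; have := sb1 b; lia.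
have [K [s [ha s0 sK ->]]] := gamma_decomp e.+1 a0.
have [K2 [s2 [hab s20 s2K ->]]] := gamma_decomp e.+1 (ltn_addr b a0).
have eK : e.+1 <= K by rewrite -bin_gt0; lia.
have KK2 : K <= K2.
  rewrite leqNgt; apply/negP => /(leq_bin2l e.+2); have := binS K2 e.+1; lia.
have hN : gamma e.+1 'C(K, e.+1) = 'C(K.+1, e.+1) by rewrite gamma_bin.
have bK := binS K e.+1; have bK1 := binS K.+1 e.+1.
case: (ltngtP K2 K.+1) => hK.
-
  have eK2 : K2 = K by lia.
  subst K2; have -> : s2 = s + b by lia.
  by have := sub1 s b; lia.
- (* a + b lies at least two blocks above a: b alone is large *)
  case: K2 hK hab s2K KK2 => [//|M] hK hab s2K KK2.
  have hKM := leq_bin2l e.+2 (hK : K.+1 <= M).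
  have hb : 'C(M, e.+1) + s2 <= b by have := binS M e.+1; lia.
  have := gamma_mono e.+1 hb.
  have := gamma_bin_addr sub0 s2 (ltac:(lia) : e < M).
  have := sb0 s2; have := binS M.+1 e.+1; lia.
-
  subst K2; case: (ltngtP s 'C(K, e.+1)) sK => // hs _.
  + have -> : b = s2 + ('C(K, e.+1) - s) by lia.
    by have := exch K s s2 eK hs; rewrite hN; lia.
  + by rewrite (_ : b = s2) ?hs ?hN; lia.
Qed.

(* A d-subset of N is handled through the reversed list of its elements: a
   strictly decreasing list of positive integers of length d.  On these lists
   the squashed order becomes the lexicographic order. *)
Definition decr (u : seq nat) : bool :=
  sorted (fun a b => b < a) u && all (fun x => 0 < x) u.

Definition dset (d : nat) (u : seq nat) : bool := (size u == d) && decr u.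

Lemma decrE x r : decr (x :: r) = [&& all (fun y => y < x) r, decr r & 0 < x].
Proof.
rewrite /decr /= path_sortedE; last by move=> a b c /= h1 h2; lia.
by case: (all _ r); case: (sorted _ r); case: (0 < x); case: (all _ r).
Qed.

Lemma dset_cons d x r :
  dset d.+1 (x :: r) = [&& all (fun y => y < x) r, dset d r & 0 < x].
Proof.
rewrite /dset decrE /= eqSS.
by case: (size r == d); case: (all _ r); case: (decr r).
Qed.

Lemma dset0 u : dset 0 u = (u == [::]).
Proof. by case: u. Qed.

Lemma dset_size d u : dset d u -> size u = d.
Proof. by case/andP => /eqP. Qed.

Lemma decr_head_bound x r y : decr (x :: r) -> y \in x :: r -> y <= x.
Proof.
rewrite decrE => /and3P[/allP h _ _]; rewrite inE => /orP[/eqP -> //|/h]; lia.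
Qed.

Fixpoint dsets (d M : nat) {struct M} : seq (seq nat) :=
  match d, M with
  | 0, _ => [:: [::]]
  | _.+1, 0 => [::]
  | d'.+1, M'.+1 => dsets d M' ++ [seq M'.+1 :: r | r <- dsets d' M']
  end.

Lemma size_dsets d M : size (dsets d M) = 'C(M, d).
Proof. by elim: M d => [|M IH] [|d] //=; rewrite size_cat size_map !IH binS. Qed.

Lemma mem_dsets d M u : (u \in dsets d M) = dset d u && all (fun x => x <= M) u.
Proof.
elim: M d u => [|M IH] [|d] u /=; try by rewrite inE dset0; case: u.
- case: u => [|x r] //; rewrite dset_cons /= in_nil.
  by apply/esym/negbTE/negP => /andP[/and3P[_ _ h1] /andP[h2 _]]; lia.
- rewrite mem_cat IH; apply/idP/idP.
  + case/orP => [/andP[-> /allP h]|/mapP[r]].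
      by apply/allP => y /h; lia.
    rewrite IH => /andP[hr /allP hM] ->.
    rewrite dset_cons hr andbT /= leqnn /=.
    by apply/andP; split; apply/allP => y /hM; lia.
  + case: u => [//|x r] /andP[hd /= /andP[xM hall]].
    case: (ltngtP x M.+1) xM => // hx _.
    * apply/orP; left; rewrite hd /=; apply/andP; split; first lia.
      apply/allP => y yr; have := @decr_head_bound x r y (andP hd).2.
      by rewrite inE yr orbT => /(_ isT); lia.
    * apply/orP; right; apply/mapP; exists r; last by rewrite hx.
      rewrite IH; move: hd; rewrite dset_cons => /and3P[hr -> _] /=.
      by apply/allP => y /(allP hr); lia.
Qed.

Lemma uniq_dsets d M : uniq (dsets d M).
Proof.
elim: M d => [|M IH] [|d] //=.
rewrite cat_uniq IH map_inj_uniq ?IH; last by move=> a b [].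
rewrite andbT /=; apply/hasPn => u /mapP[r _ ->].
by rewrite mem_dsets /= ltnn andbF.
Qed.

(* The squashed rank of a d-set (counted from 1): the cascade
   rank (x_1 > ... > x_d) = 1 + \sum_i 'C(x_i - 1, d - i + 1). *)
Fixpoint rank (u : seq nat) : nat :=
  if u is x :: r then 'C(x.-1, (size r).+1) + rank r else 1.

Lemma dset_tail_bound d x r : dset d.+1 (x :: r) -> all (fun y => y <= x.-1) r.
Proof. by rewrite dset_cons => /and3P[/allP hr _ _]; apply/allP => y /hr; lia. Qed.

Lemma binS_pred x d : 0 < x -> 'C(x.-1, d.+1) + 'C(x.-1, d) = 'C(x, d.+1).
Proof. by move=> x0; rewrite -binS prednK. Qed.

Lemma rank_bound d u M : dset d u -> all (fun x => x <= M) u -> 0 < rank u <= 'C(M, d).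
Proof.
elim: u d M => [|x r IH] d M /=; first by move=> /andP[/eqP <- _] _; rewrite bin0.
case: d => [//|d] hxr /andP[xM _]; have := dset_tail_bound hxr.
move: hxr; rewrite dset_cons => /and3P[_ hd x0] /(IH d x.-1 hd) /andP[h1 h2].
have := leq_bin2l d.+1 xM; have := binS_pred d x0; rewrite (dset_size hd); lia.
Qed.

Lemma rank_cons_bound d x r : dset d.+1 (x :: r) ->
  'C(x.-1, d.+1) < rank (x :: r) <= 'C(x, d.+1).
Proof.
move=> hxr; have := dset_tail_bound hxr.
move: hxr; rewrite dset_cons => /and3P[_ hd x0] /(rank_bound hd) /andP[h1 h2] /=.
by have := binS_pred d x0; rewrite (dset_size hd); lia.
Qed.

Fixpoint lexlt (u v : seq nat) : bool :=
  match u, v with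
  | x :: r, y :: s => (x < y) || ((x == y) && lexlt r s)
  | _, _ => false
  end.

Lemma rank_cons_lt d x r y s : dset d.+1 (x :: r) -> dset d.+1 (y :: s) -> x < y ->
  rank (x :: r) < rank (y :: s).
Proof.
move=> /rank_cons_bound hu /rank_cons_bound hv xy.
by have := leq_bin2l d.+1 (_ : x <= y.-1); lia.
Qed.

Lemma rank_lt d u v : dset d u -> dset d v -> (rank u < rank v) = lexlt u v.
Proof.
elim: u d v => [|x r IH] d [|y s]; try by move=> /dset_size <- /dset_size.
case: d => [//|d] hu hv; rewrite [lexlt _ _]/=.
case: (ltngtP x y) => hxy.
- by rewrite (rank_cons_lt hu hv hxy).
- by apply/negbTE; rewrite -leqNgt ltnW // (rank_cons_lt hv hu hxy).
- subst y; move: hu hv; rewrite !dset_cons => /and3P[_ hr _] /and3P[_ hs _].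
  by rewrite /= (dset_size hr) (dset_size hs) ltn_add2l (IH d s hr hs).
Qed.

Lemma rank_inj d u v : dset d u -> dset d v -> rank u = rank v -> u = v.
Proof.
elim: u d v => [|x r IH] d [|y s]; try by move=> /dset_size <- /dset_size.
case: d => [//|d] hu hv heq.
case: (ltngtP x y) => hxy.
- by have := rank_cons_lt hu hv hxy; rewrite heq ltnn.
- by have := rank_cons_lt hv hu hxy; rewrite heq ltnn.
- subst y; move: hu hv heq; rewrite !dset_cons => /and3P[_ hr _] /and3P[_ hs _] /=.
  by rewrite (dset_size hr) (dset_size hs) => /addnI /(IH d s hr hs) ->.
Qed.

(* The images of a decreasing list under the maps of Inc_1: such a map fixes
   an initial segment of N and adds 1 beyond it, so it either fixes the whole
   list or raises its head by one and acts likewise on the tail. *)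
Fixpoint incs (u : seq nat) : seq (seq nat) :=
  if u is x :: r then (x :: r) :: [seq x.+1 :: s | s <- incs r] else [:: [::]].

Definition IncL (F : seq (seq nat)) : seq (seq nat) := undup (flatten (map incs F)).

Lemma mem_IncL F w : (w \in IncL F) = has (fun u => w \in incs u) F.
Proof. by rewrite mem_undup; apply/flatten_mapP/hasP => -[u h1 h2]; exists u. Qed.

Lemma incs_self u : u \in incs u.
Proof. by case: u => [|x r]; rewrite inE eqxx. Qed.

Lemma incs_head u w : w \in incs u -> head 0 w <= (head 0 u).+1.
Proof.
case: u => [|x r] /=; first by rewrite inE => /eqP ->.
by rewrite inE => /orP[/eqP -> //|/mapP[s hs ->]].
Qed.

Lemma incs_bound u w b : all (fun y => y < b) u -> w \in incs u -> all (fun y => y <= b) w.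
Proof.
elim: u w => [|x r IH] w /=; first by rewrite inE => _ /eqP ->.
move=> /andP[xb hr]; rewrite inE => /orP[/eqP ->|/mapP[s hs ->]] /=.
  by rewrite ltnW //=; apply/allP => y /(allP hr); lia.
by rewrite xb /= (IH s).
Qed.

Lemma incs_dset d u w : dset d u -> w \in incs u -> dset d w.
Proof.
elim: u d w => [|x r IH] d w /=; first by rewrite inE => h /eqP ->.
case: d => [//|d].
rewrite dset_cons => /and3P[hr hd x0]; rewrite inE => /orP[/eqP ->|/mapP[s hs ->]].
  by rewrite dset_cons hr hd x0.
rewrite dset_cons (IH d s hd hs) andbT /=.
by apply/allP => y /(allP (incs_bound hr hs)); lia.
Qed.

Lemma rank_incs d u w : dset d u -> w \in incs u -> rank w <= rank (map S u).
Proof.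
elim: u d w => [|x r IH] d w /=; first by rewrite inE => _ /eqP ->.
case: d => [//|d] hxr; have := dset_tail_bound hxr.
move: hxr; rewrite dset_cons => /and3P[hr hd x0] /(rank_bound hd) /andP[_ rb].
rewrite inE => /orP[/eqP ->|/mapP[s hs ->]] /=; rewrite size_map (dset_size hd).
  by have := binS_pred d x0; lia.
by rewrite (dset_size (incs_dset hd hs)) leq_add2l (IH d s hd hs).
Qed.

Lemma rank_shift d u : dset d u -> rank (map S u) = gamma d (rank u).
Proof.
elim: u d => [|x r IH] d /=; first by move=> /dset_size <-.
case: d => [//|d] hxr; have := dset_tail_bound hxr.
move: hxr; rewrite dset_cons => /and3P[hr hd x0] /(rank_bound hd) /andP[rb1 rb2].
by rewrite size_map (dset_size hd) gamma_cascade ?rb1 //= (IH d hd) prednK.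
Qed.

Definition inc_lower_bound d :=
  forall F, uniq F -> all (dset d) F -> gamma d (size F) <= size (IncL F).

(* F is contained in Inc F. *)
Lemma size_IncL F : uniq F -> size F <= size (IncL F).
Proof.
move=> uF; apply: uniq_leq_size => // u uF'.
by rewrite mem_IncL; apply/hasP; exists u => //; exact: incs_self.
Qed.

Lemma inc_lower_bound0 : inc_lower_bound 0.
Proof. by move=> F uF _; rewrite gamma0n; exact: size_IncL. Qed.

(* The largest element L occurring in a family F of decreasing lists splits F
   into the sets not containing L and those containing it, which are L
   followed by a (d-1)-set (a "top tail"). *)
Definition top (F : seq (seq nat)) : nat := foldr (fun u m => maxn (head 0 u) m) 0 F.

Definition below_top (F : seq (seq nat)) := [seq u <- F | head 0 u != top F].

Definition top_tails (F : seq (seq nat)) := [seq behead u | u <- F & head 0 u == top F].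

Lemma top_ge F u : u \in F -> head 0 u <= top F.
Proof. by elim: F => [//|v F IH] /=; rewrite inE => /orP[/eqP ->|/IH]; lia. Qed.

Lemma top_in F : F != [::] -> exists2 u, u \in F & head 0 u = top F.
Proof.
elim: F => [//|v F IH] _ /=.
case: (leqP (top F) (head 0 v)) => h; first by exists v; rewrite ?inE ?eqxx //; lia.
have [|u uF hu] := IH; first by case: F h {IH}.
by exists u; [rewrite inE uF orbT | lia].
Qed.

Lemma size_below_top F : size F = size (below_top F) + size (top_tails F).
Proof. by rewrite size_map !size_filter addnC count_predC. Qed.

Lemma top_tails_gt0 F : F != [::] -> 0 < size (top_tails F).
Proof.
move=> /top_in[u uF hu]; rewrite size_map size_filter -has_count.
by apply/hasP; exists u; rewrite /= ?hu.
Qed.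

Section TopSplit.

Variables (d : nat) (F : seq (seq nat)).
Hypothesis dsetF : all (dset d.+1) F.

Lemma dset_head u : u \in F -> u = head 0 u :: behead u.
Proof. by move=> /(allP dsetF); case: u. Qed.

Lemma uniq_top_tails : uniq F -> uniq (top_tails F).
Proof.
move=> uF; rewrite map_inj_in_uniq ?filter_uniq //.
move=> u v; rewrite !mem_filter => /andP[/eqP hu uF'] /andP[/eqP hv vF] he.
by rewrite (dset_head uF') (dset_head vF) hu hv he.
Qed.

Lemma dset_top_tails : all (dset d) (top_tails F).
Proof.
apply/allP => w /mapP[u]; rewrite mem_filter => /andP[_ uF] ->.
by have := allP dsetF u uF; rewrite (dset_head uF) dset_cons => /and3P[].
Qed.

(* Inc F contains Inc (below_top F) and F, all with head at most L = top F,
   and the sets L.+1 :: w for w in Inc (top_tails F). *)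
Lemma IncL_top_split : uniq F ->
  maxn (size (IncL (below_top F))) (size F) + size (IncL (top_tails F)) <= size (IncL F).
Proof.
move=> uF; set L := top F.
set A := undup (IncL (below_top F) ++ F).
set B := [seq L.+1 :: s | s <- IncL (top_tails F)].
have headA w : w \in A -> head 0 w <= L.
  rewrite mem_undup mem_cat => /orP[|/top_ge //].
  rewrite mem_IncL => /hasP[u]; rewrite mem_filter => /andP[hu uF'] hw.
  by have := incs_head hw; have := top_ge uF'; move: hu; rewrite -/L; lia.
have uAB : uniq (A ++ B).
  rewrite cat_uniq undup_uniq map_inj_uniq ?undup_uniq //=; last by move=> a b [].
  by rewrite andbT; apply/hasPn => w /mapP[s _ ->]; apply/negP => /headA /=; lia.
have sAB : {subset A ++ B <= IncL F}.
  move=> w; rewrite mem_cat mem_undup mem_cat !mem_IncL => /orP[/orP[|wF]|].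
  - by case/hasP => u; rewrite mem_filter => /andP[_ uF'] hw; apply/hasP; exists u.
  - by apply/hasP; exists w => //; exact: incs_self.
  - case/mapP => s; rewrite mem_IncL => /hasP[v] /mapP[u].
    rewrite mem_filter => /andP[/eqP hu uF'] -> hs ->.
    apply/hasP; exists u => //; rewrite (dset_head uF') /= inE hu.
    by apply/orP; right; apply/mapP; exists s.
have := uniq_leq_size uAB sAB; rewrite size_cat size_map; apply: leq_trans.
rewrite leq_add2r geq_max; apply/andP; split.
- by apply: uniq_leq_size (undup_uniq _) _ => w hw; rewrite mem_undup mem_cat hw.
- by apply: uniq_leq_size uF _ => w hw; rewrite mem_undup mem_cat hw orbT.
Qed.

End TopSplit.

(* Induction on |F|: remove the sets containing the largest element. *)
Lemma inc_lower_boundS d : inc_lower_bound d -> split_bound d -> inc_lower_bound d.+1.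
Proof.
move=> low spl F; elim: {F}(size F) {-2}F (leqnn (size F)) => [|n IH] F hn uF dF.
  by move: hn; rewrite leqn0 => /nilP ->; rewrite gamma_d0.
case: (eqVneq F [::]) => [-> //|F0].
have hsz := size_below_top F; have T0 := top_tails_gt0 F0.
have hR : size (below_top F) <= n by move: hn; rewrite hsz; lia.
have dR : all (dset d.+1) (below_top F).
  by apply/allP => u; rewrite mem_filter => /andP[_ /(allP dF)].
have IHR := IH (below_top F) hR (filter_uniq _ uF) dR.
rewrite [in X in X <= _]hsz; apply: leq_trans (spl _ _) _; rewrite -hsz.
apply: leq_trans (IncL_top_split dF uF); apply: leq_add.
  by rewrite geq_max !leq_max leqnn IHR orbT.
exact: low _ (uniq_top_tails dF uF) (dset_top_tails dF).
Qed.

(* The first N d-sets in squashed order (all of them lie in [1..N+d]). *)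
Definition initial (d N : nat) := [seq u <- dsets d (N + d) | rank u <= N].

Lemma uniq_initial d N : uniq (initial d N).
Proof. exact/filter_uniq/uniq_dsets. Qed.

Lemma mem_initial d N u : (u \in initial d N) = dset d u && (rank u <= N).
Proof.
rewrite mem_filter mem_dsets andbC; apply/idP/idP; first by case/andP => /andP[-> _] ->.
case/andP => hd hN; rewrite hd hN /=.
case: d hd => [|e] hd; first by move: hd; rewrite dset0 => /eqP ->.
case: u hd hN => [//|x r] hd hN.
have /andP[b1 _] := rank_cons_bound hd.
have xb : x <= N + e.
  rewrite leqNgt; apply/negP => hx.
  have hbin : 'C(N + e, e.+1) <= 'C(x.-1, e.+1) by apply: leq_bin2l; lia.
  have CN := leq_trans b1 hN; have N0 := leq_ltn_trans (leq0n _) CN.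
  by have := leq_ltn_trans (leq_trans (leq_bin_addn e N0) hbin) CN; rewrite ltnn.
by rewrite andbT; apply/allP => y /(decr_head_bound (andP hd).2); lia.
Qed.

Lemma size_initial d N : 0 < d -> size (initial d N) = N.
Proof.
move=> d0; rewrite /initial size_filter -(count_map rank (fun k => k <= N)).
have NM : N <= 'C(N + d, d).
  case: N => [//|N]; case: d d0 => [//|e] _.
  by apply: leq_trans (leq_bin_addn e (ltn0Sn N)) (leq_bin2l _ _); lia.
set M := N + d in NM *.
have sub : {subset map rank (dsets d M) <= iota 1 'C(M, d)}.
  move=> k /mapP[u]; rewrite mem_dsets => /andP[hu hM] ->.
  by have := rank_bound hu hM; rewrite mem_iota; lia.
have um : uniq (map rank (dsets d M)).
  rewrite map_inj_in_uniq ?uniq_dsets //.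
  by move=> u v; rewrite !mem_dsets => /andP[hu _] /andP[hv _]; exact: (rank_inj hu hv).
have szle : size (iota 1 'C(M, d)) <= size (map rank (dsets d M)).
  by rewrite size_map size_iota size_dsets.
have [_ hm] := uniq_min_size um sub szle.
rewrite (permP (uniq_perm um (iota_uniq _ _) hm)).
rewrite -(subnKC NM) iotaD count_cat (eq_in_count (a2 := predT)); last first.
  by move=> k; rewrite mem_iota /=; lia.
rewrite (eq_in_count (a1 := fun k => k <= N) (a2 := pred0)); last first.
  by move=> k; rewrite mem_iota /=; lia.
by rewrite count_predT count_pred0 size_iota addn0.
Qed.

Lemma IncL_initial d x : 0 < d -> size (IncL (initial d x)) <= gamma d x.
Proof.
move=> d0; rewrite -(@size_initial d (gamma d x) d0).
apply: uniq_leq_size; first exact: undup_uniq.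
move=> w; rewrite mem_IncL => /hasP[u]; rewrite mem_initial => /andP[hu hux] hw.
rewrite mem_initial (incs_dset hu hw) /=.
by apply: leq_trans (rank_incs hu hw) _; rewrite (rank_shift hu) gamma_mono.
Qed.

Definition translate c (u : seq nat) := map (addn c) u.

Lemma incs_translate c u : incs (translate c u) = map (translate c) (incs u).
Proof.
elim: u => [//|x r IH] /=; rewrite /translate /= in IH *; rewrite IH -!map_comp.
by congr (_ :: _); apply: eq_map => s /=; rewrite addnS.
Qed.

Lemma dset_translate d c u : dset d u -> dset d (translate c u).
Proof.
elim: u d => [|x r IH] [|d] //= ; rewrite !dset_cons => /and3P[hr hd x0].
rewrite (IH d hd) /=; apply/andP; split; last lia.
by apply/allP => y /mapP[z /(allP hr) hz ->]; lia.
Qed.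

Lemma IncL_translate c F : size (IncL (map (translate c) F)) <= size (IncL F).
Proof.
rewrite -(size_map (translate c) (IncL F)); apply: uniq_leq_size; first exact: undup_uniq.
move=> w; rewrite mem_IncL => /hasP[v /mapP[u uF ->]].
rewrite incs_translate => /mapP[w' hw' ->].
by apply: map_f; rewrite mem_IncL; apply/hasP; exists u.
Qed.

Lemma IncL_cat A B : size (IncL (A ++ B)) <= size (IncL A) + size (IncL B).
Proof.
rewrite -size_cat; apply: uniq_leq_size; first exact: undup_uniq.
by move=> w; rewrite mem_cat !mem_IncL has_cat; case/orP => ->; rewrite ?orbT.
Qed.

(* Subadditivity of gamma from the lower bound: apply it to the first x
   d-sets together with a translate of the first y d-sets, disjoint from them. *)
Lemma subadditive_of_lower_bound d : inc_lower_bound d -> subadditive d.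
Proof.
move=> low x y; case: d low => [|e] low; first by rewrite !gamma0n.
set X := initial e.+1 x; set Y := map (translate (x + e.+1)) (initial e.+1 y).
have uZ : uniq (X ++ Y).
  rewrite cat_uniq uniq_initial map_inj_uniq ?uniq_initial; last first.
    by move=> u v; apply: inj_map; exact: addnI.
  rewrite andbT /=; apply/hasPn => w /mapP[v]; rewrite mem_initial => /andP[hv _] ->.
  apply/negP; rewrite mem_filter mem_dsets => /andP[_ /andP[_ hall]].
  case: v hv hall => [//|z r] hv /= /andP[hz _].
  by move: hv hz; rewrite dset_cons => /and3P[_ _ z0]; lia.
have dZ : all (dset e.+1) (X ++ Y).
  rewrite all_cat; apply/andP; split; apply/allP => w.
    by rewrite mem_initial => /andP[].
  by move=> /mapP[v]; rewrite mem_initial => /andP[hv _] ->; exact: dset_translate.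
have := low _ uZ dZ; rewrite size_cat size_map !size_initial // => h.
apply: (leq_trans h); apply: (leq_trans (IncL_cat _ _)).
apply: leq_add; first exact: IncL_initial.
exact: leq_trans (IncL_translate _ _) (IncL_initial _ _).
Qed.

Lemma gamma_inequalities d :
  [/\ inc_lower_bound d, subadditive d, split_bound d, succ_bound d
    & (0 < d -> exchange_low d)].
Proof.
elim: d => [|d [low sub spl sb exl]].
  by split; [exact: inc_lower_bound0 | exact: subadditive_of_lower_bound inc_lower_bound0
            | exact: split_bound0 | exact: succ_bound0 | ].
have low' := inc_lower_boundS low spl.
have sub' := subadditive_of_lower_bound low'.
have exl' : exchange_low d.+1.
  case: d {low spl sb low'} sub sub' exl => [|e] sub sub' exl; first exact: exchange_low1.
  exact: exchange_lowS (exl isT) sub' sub.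
split => //; first exact: split_boundS sub' sub sb (succ_boundS sub sb)
  (exchangeP exl' (exchange_highS spl sub)).
exact: succ_boundS.
Qed.

Theorem inc_lower_bound_all d : inc_lower_bound d.
Proof. by case: (gamma_inequalities d). Qed.

Lemma dface_rev d w : dface d w = dset d (rev w).
Proof.
rewrite /dface /dset /is_face /decr size_rev all_rev rev_sorted eq_sym.
by case: (sorted ltn w); case: (all _ w); case: (d == size w).
Qed.

Lemma sqlt_rev u v : sqlt (rev u) (rev v) = sqlt u v.
Proof.
rewrite /sqlt has_rev; apply: eq_has => x /=; rewrite mem_rev.
congr (_ && _); rewrite !all_filter -rev_cat all_rev !all_cat andbC.
by congr (_ && _); apply: eq_all => y /=; rewrite !mem_rev.
Qed.

Lemma sqlt_lexlt d U V : dset d U -> dset d V -> sqlt U V = lexlt U V.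
Proof.
elim: U d V => [|a r IH] d [|b s] //; try by move=> /dset_size <- /dset_size.
case: d => [//|e]; rewrite !dset_cons => /and3P[hr dr a0] /and3P[hs ds b0] /=.
have mr : forall y, y \in r -> y < a by move=> y /(allP hr).
have ms : forall y, y \in s -> y < b by move=> y /(allP hs).
case: (ltngtP a b) => hab /=.
- apply/hasP; exists b; first by rewrite inE eqxx.
  rewrite inE negb_or; apply/andP; split.
    by rewrite neq_ltn hab orbT /=; apply/negP => /mr; lia.
  apply/allP => y; rewrite mem_filter => /andP[hy]; rewrite mem_cat !inE.
  by rewrite -orbA => /or4P[/eqP hh|/mr hh|/eqP hh|/ms hh]; exfalso; lia.
- apply/negP => /hasP[x]; rewrite inE => hx /andP[_ /allP hall].
  have xb : x <= b by case/orP: hx => [/eqP ->|/ms]; lia.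
  have := hall a; rewrite mem_filter mem_cat !inE eqxx /= => /(_ ltac:(lia)).
  by case/orP => [/eqP hh|/ms]; lia.
- subst b; rewrite -(IH e s dr ds); apply/hasP/hasP => [[x]|[x xs]].
  + rewrite inE => hx /andP[xU /allP hall].
    have xa : x != a by apply: contraNneq xU => ->; rewrite inE eqxx.
    have xs : x \in s by move: hx; rewrite (negPf xa).
    exists x => //; apply/andP; split; first by move: xU; rewrite inE negb_or => /andP[].
    apply/allP => y; rewrite mem_filter => /andP[hy ys].
    have ya : y != a by move: ys; rewrite mem_cat => /orP[/mr|/ms]; lia.
    have := hall y; rewrite mem_filter hy mem_cat !inE (negPf ya) /=.
    by apply; rewrite -mem_cat.
  + move=> /andP[xr /allP hall]; exists x; first by rewrite inE xs orbT.
    have xa : x < a by apply: ms.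
    apply/andP; split; first by rewrite inE negb_or xr andbT neq_ltn xa.
    apply/allP => y; rewrite mem_filter => /andP[hy]; rewrite mem_cat !inE.
    case: (eqVneq y a) => [-> //|ya] /= hy2.
    by apply: hall; rewrite mem_filter hy mem_cat.
Qed.

Lemma Inc1_ge pi j : Inc1 pi -> 0 < j -> j <= pi j.
Proof.
move=> hpi; elim: j => [//|[|j] IH] _; first by case: (hpi 1 isT).
by have := IH isT; case: (hpi j.+1 isT); lia.
Qed.

Lemma Inc1_fixed pi i j : Inc1 pi -> 0 < i -> i <= j -> pi j = j -> pi i = i.
Proof.
move=> hpi i0; elim: j => [|j IH]; first lia.
rewrite leq_eqVlt => /orP[/eqP <- //|hij] hj; have j0 : 0 < j by lia.
by apply: IH; [lia | have := Inc1_ge hpi j0; case: (hpi j j0); lia].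
Qed.

Lemma map_Inc1_incs pi U : Inc1 pi -> decr U -> map pi U \in incs U.
Proof.
move=> hpi; elim: U => [|x r IH] /=; first by rewrite inE.
rewrite decrE => /and3P[hr dr x0]; have := Inc1_ge hpi x0.
case: (hpi x x0) => _ _ hx; rewrite leq_eqVlt => /orP[/eqP fix_x|gt_x].
- rewrite -fix_x map_id_in ?inE ?eqxx // => y yr.
  have y0 : 0 < y by move: dr => /andP[_ /allP /(_ y yr)].
  by apply: Inc1_fixed hpi y0 (ltnW (allP hr y yr)) _.
- by rewrite inE (_ : pi x = x.+1) ?(map_f _ (IH dr)) ?orbT //; lia.
Qed.

Lemma Inc1_bump t : Inc1 (bump t).
Proof. by move=> j j0; rewrite /bump; case: (leqP t j); case: (leqP t j.+1); split; lia. Qed.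

Lemma incs_bump U W : decr U -> W \in incs U ->
  exists2 t, t <= (head 0 U).+1 & W = map (bump t) U.
Proof.
elim: U W => [|x r IH] W /=; first by rewrite inE => _ /eqP ->; exists 0.
rewrite decrE => /and3P[hr dr x0]; rewrite inE => /orP[/eqP ->|/mapP[S hS ->]].
  exists x.+1 => //=; rewrite /bump ltnn add0n; congr (_ :: _).
  by rewrite map_id_in // => y /(allP hr) yx; rewrite leqNgt ltnS (ltnW yx).
have [t ht ->] := IH S dr hS.
have tx : t <= x by case: r hr ht {IH hS dr} => [|y r'] /=; [lia | move=> /andP[yx _]; lia].
by exists t; [lia | rewrite /= /bump tx].
Qed.

Lemma has_card_uniq P n m : has_card P n -> has_card P m -> n = m.
Proof.
move=> [s1 [u1 [<- h1]]] [s2 [u2 [<- h2]]].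
apply: perm_size; apply: uniq_perm => // x.
by apply/idP/idP => hx; [apply/h2/h1 | apply/h1/h2].
Qed.

Lemma has_card_ext P Q n : (forall x, P x <-> Q x) -> has_card P n -> has_card Q n.
Proof. by move=> PQ [s [us [sz hs]]]; exists s; do 2!split => //; move=> x; rewrite -PQ. Qed.

Lemma mem_map_rev (L : seq (seq nat)) x : (x \in map rev L) = (rev x \in L).
Proof. by rewrite -{1}(revK x) (mem_map (can_inj (@revK nat))). Qed.

Lemma has_card_map_rev P L : uniq L -> (forall x : seq nat, P x <-> rev x \in L) ->
  has_card P (size L).
Proof.
move=> uL hP; exists (map rev L); rewrite size_map map_inj_uniq //.
  by do 2!split => //; move=> x; rewrite mem_map_rev.
exact: can_inj (@revK nat).
Qed.

Lemma card_sqle d v : 0 < d -> dface d v ->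
  has_card (fun w => dface d w /\ (w = v \/ sqlt w v)) (rank (rev v)).
Proof.
move=> d0; rewrite dface_rev => hv; rewrite -(@size_initial d (rank (rev v)) d0).
apply: has_card_map_rev (uniq_initial _ _) _ => x.
rewrite mem_initial dface_rev -sqlt_rev; split.
  case=> hx [->|]; first by rewrite hv leqnn.
  by rewrite (sqlt_lexlt hx hv) -(rank_lt hx hv) hx => /ltnW.
move=> /andP[hx]; rewrite leq_eqVlt => /orP[/eqP /(rank_inj hx hv) e|].
  by split=> //; left; rewrite -[x]revK e revK.
by rewrite (rank_lt hx hv) -(sqlt_lexlt hx hv); split=> //; right.
Qed.

Lemma CdP d F n v : 0 < d -> has_card F n ->
  Cd d F v <-> dface d v /\ rank (rev v) <= n.
Proof.
move=> d0 hF; split.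
  move=> [hv [n' [k [hF' [hk kn]]]]]; split=> //.
  by rewrite (has_card_uniq hF hF') -(has_card_uniq hk (card_sqle d0 hv)).
by move=> [hv vn]; split=> //; exists n, (rank (rev v)); split=> //; split=> //; exact: card_sqle.
Qed.

Lemma Inc1_face d pi w : Inc1 pi -> dface d w ->
  dface d (map pi w) /\ rank (rev (map pi w)) <= gamma d (rank (rev w)).
Proof.
rewrite !dface_rev -map_rev => hpi hw; have hinc := map_Inc1_incs hpi (andP hw).2.
split; first exact: incs_dset hw hinc.
by rewrite -(rank_shift hw); exact: rank_incs hw hinc.
Qed.

Lemma IncF_rev d F s x : (forall y, F y -> dface d y) -> (forall y, F y <-> y \in s) ->
  IncF F x <-> rev x \in IncL (map rev s).
Proof.
move=> faceF hs; rewrite mem_IncL; split.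
  move=> [w [pi [Fw [hpi ->]]]]; apply/hasP; exists (rev w); first exact/map_f/hs.
  by rewrite -map_rev; apply: map_Inc1_incs => //; move: (faceF w Fw); rewrite dface_rev => /andP[].
move=> /hasP[U /mapP[w ws ->]] /incs_bump [|t _ ht].
  by have := faceF w ((hs w).2 ws); rewrite dface_rev => /andP[].
exists w, (bump t); split; first exact/hs.
by split; [exact: Inc1_bump | rewrite -(revK x) ht map_rev revK].
Qed.

Lemma card_IncF d F n : (forall x, F x -> dface d x) -> has_card F n ->
  exists2 n', has_card (IncF F) n' & gamma d n <= n'.
Proof.
move=> faceF [s [us [<- hs]]]; exists (size (IncL (map rev s))).
  by apply: has_card_map_rev (undup_uniq _) _ => x; exact: IncF_rev faceF hs.
rewrite -(size_map rev); apply: inc_lower_bound_all.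
  by rewrite map_inj_uniq //; exact: can_inj (@revK nat).
by apply/allP => U /mapP[w ws ->]; rewrite -dface_rev; apply/faceF/hs.
Qed.

Lemma Fd_Inccomplex D d x : 0 < d -> Fd (Inccomplex D) d x <-> IncF (Fd D d) x.
Proof.
move=> d0; split.
  move=> [[x0|[d' [_ [w [pi [[Dw _] [hpi ex]]]]]]] hsz]; first by move: hsz d0; rewrite x0 => <-.
  by exists w, pi; rewrite /Fd -hsz ex size_map.
move=> [w [pi [[Dw hw] [hpi ex]]]]; split; last by rewrite ex size_map.
by right; exists d; split=> //; exists w, pi.
Qed.

Unset Implicit Arguments.

Theorem corollary4p2 (m : nat) (D : seq nat -> Prop) :
  simplicial_complex m D ->
  forall u, Inccomplex (Ccomplex D) u -> Ccomplex (Inccomplex D) u.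
Proof.
move=> [hD _] u [->|[d [d0 [w [pi [[hw hsz] [hpi ->]]]]]]]; first by left.
case: hw => [w0|[d' [_ hC]]]; first by move: hsz d0; rewrite w0 => <-.
have ed : d' = d by case: hC => /andP[_ /eqP <-].
subst d'; have faces x : Fd D d x -> dface d x.
  by case=> /hD /andP[fx _] <-; rewrite /dface fx eqxx.
have [_ [n [_ [hn _]]]] := hC; have [n' hn' gn] := card_IncF faces hn.
have hInc := has_card_ext (fun x => iff_sym (Fd_Inccomplex D x d0)) hn'.
have [fw rw] := Inc1_face hpi hC.1; have [_ wn] := (CdP w d0 hn).1 hC.
right; exists d; split=> //; apply/(CdP _ d0 hInc); split=> //.
exact: leq_trans rw (leq_trans (gamma_mono d wn) gn).
Qed.
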